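(* Let $n\ge1$ and let $M_1,\dots,M_n$ be two-row channels each having exactly two columns. Then the greatest lower bound $\min_{1\le i\le n}M_i$ exists in $(\mathbb{C}_2,\sqsubseteq)$ (and is a two-row channel with finitely many columns).
   Context: A two-row channel with output set $\mathcal{Y}$ is a $2\times|\mathcal{Y}|$ matrix with nonnegative entries whose rows sum to $1$; $\mathbb{C}_2$ denotes the set of such channels. Refinement: $C\sqsubseteq C'$ iff there is a row-stochastic matrix $W$ with $C\cdot W=C'$. A greatest lower bound of a family $(M_i)$ is a channel $G$ with $G\sqsubseteq M_i$ for all $i$, such that $H\sqsubseteq G$ for every channel $H$ with $H\sqsubseteq M_i$ for all $i$ (unique up to mutual refinement). *)

From HB Require Import structures.
From mathcomp Require Import all_boot all_order all_algebra.
From mathcomp Require Export reals.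
Set Implicit Arguments. Unset Strict Implicit. Unset Printing Implicit Defensive.
Import Order.TTheory GRing.Theory Num.Theory.
Local Open Scope ring_scope.

Definition row_stochastic (R : realType) (m k : nat) (W : 'M[R]_(m, k)) : Prop :=
  (forall i j, 0 <= W i j) /\ (forall i, \sum_(j < k) W i j = 1).

Definition channel2 (R : realType) (m : nat) (C : 'M[R]_(2, m)) : Prop :=
  row_stochastic C.

Definition refines (R : realType) (m k : nat)
    (C : 'M[R]_(2, m)) (C' : 'M[R]_(2, k)) : Prop :=
  exists W : 'M[R]_(m, k), row_stochastic W /\ C *m W = C'.

Definition is_glb2 (R : realType) (n k : nat)
    (M : 'I_n -> 'M[R]_(2, k)) (g : nat) (G : 'M[R]_(2, g)) : Prop :=
  channel2 G /\ (forall i, refines G (M i)) /\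
  (forall (h : nat) (H : 'M[R]_(2, h)), channel2 H ->
     (forall i, refines H (M i)) -> refines H G).

From mathcomp Require Import all_boot all_order all_algebra reals.
From mathcomp Require Import ring lra.
Set Implicit Arguments. Unset Strict Implicit. Unset Printing Implicit Defensive.
Import Order.TTheory GRing.Theory Num.Theory.
Local Open Scope ring_scope.

(* A two-row channel is the family of its columns, vectors of the closed first
   quadrant summing to (1, 1).  Sorted by slope, the columns of C form a convex
   path from 0 to (1, 1), and C refines to C' as soon as every partial sum of
   the slope-sorted columns of C' lies on the left of that path: the splitting
   matrix is then built greedily, one column of C' at a time.  The greatest
   lower bound of M_1, ..., M_n is the channel whose columns are the edges of
   the boundary of the convex hull of 0, (1, 1) and the columns of the M_i
   below the diagonal.  Each column of each M_i lies on the left of this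
   boundary, and conversely every vertex of the boundary is a column of some
   M_i, which a common lower bound H splits, so it lies on the left of the path
   of H. *)

Section PartialSums.
Variable V : nmodType.
Implicit Types (v : nat -> V) (s : seq V).

Definition psum v (j : nat) : V := \sum_(0 <= i < j) v i.

Lemma psum0 v : psum v 0 = 0.
Proof. by rewrite /psum big_geq. Qed.

Lemma psumS v j : psum v j.+1 = psum v j + v j.
Proof. by rewrite /psum big_nat_recr. Qed.

Lemma psum_split v j p : (j <= p)%N -> psum v p = psum v j + \sum_(j <= i < p) v i.
Proof. by move=> hjp; rewrite /psum (big_cat_nat (leq0n j) hjp). Qed.

Lemma psum_size s : psum (nth 0 s) (size s) = \sum_(x <- s) x.
Proof. by rewrite [RHS](big_nth 0). Qed.

Lemma psum_cons x s k : psum (nth 0 (x :: s)) k.+1 = x + psum (nth 0 s) k.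
Proof. by rewrite /psum big_nat_recl. Qed.

Lemma psum_catl s1 s2 k : (k <= size s1)%N ->
  psum (nth 0 (s1 ++ s2)) k = psum (nth 0 s1) k.
Proof.
by move=> hk; apply: eq_big_nat => i /andP[_ hi]; rewrite nth_cat (leq_trans hi hk).
Qed.

Lemma psum_catr s1 s2 k :
  psum (nth 0 (s1 ++ s2)) (size s1 + k) = \sum_(x <- s1) x + psum (nth 0 s2) k.
Proof.
rewrite (psum_split _ (leq_addr k _)) -psum_size (psum_catl _ (leqnn _)).
congr (_ + _); rewrite -{1}[size s1]add0n big_addn addKn /psum.
by apply: eq_bigr => i _; rewrite nth_cat ltnNge leq_addl addnK.
Qed.

End PartialSums.

Section Cross.
Variable R : comPzRingType.
Implicit Types (a : R) (p q r : R * R).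

Definition cross p q : R := p.1 * q.2 - p.2 * q.1.
Definition scale2 a p : R * R := (a * p.1, a * p.2).

Lemma fst_sum (I : Type) (s : seq I) (P : pred I) (F : I -> R * R) :
  (\sum_(i <- s | P i) F i).1 = \sum_(i <- s | P i) (F i).1.
Proof. exact: (big_morph fst). Qed.

Lemma snd_sum (I : Type) (s : seq I) (P : pred I) (F : I -> R * R) :
  (\sum_(i <- s | P i) F i).2 = \sum_(i <- s | P i) (F i).2.
Proof. exact: (big_morph snd). Qed.

Lemma cross_sumr (I : Type) (s : seq I) (P : pred I) (F : I -> R * R) p :
  cross p (\sum_(i <- s | P i) F i) = \sum_(i <- s | P i) cross p (F i).
Proof. by rewrite /cross fst_sum snd_sum !mulr_sumr -sumrB. Qed.

Lemma cross_suml (I : Type) (s : seq I) (P : pred I) (F : I -> R * R) p :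
  cross (\sum_(i <- s | P i) F i) p = \sum_(i <- s | P i) cross (F i) p.
Proof. by rewrite /cross fst_sum snd_sum !mulr_suml -sumrB. Qed.

Lemma crossDr p q r : cross p (q + r) = cross p q + cross p r.
Proof. rewrite /cross /=; ring. Qed.

Lemma crossBr p q r : cross p (q - r) = cross p q - cross p r.
Proof. rewrite /cross /=; ring. Qed.

Lemma crossDl p q r : cross (q + r) p = cross q p + cross r p.
Proof. rewrite /cross /=; ring. Qed.

Lemma crossC p q : cross p q = - cross q p.
Proof. rewrite /cross; ring. Qed.

Lemma crossxx p : cross p p = 0.
Proof. rewrite /cross; ring. Qed.

Lemma crossNr p q : cross p (- q) = - cross p q.
Proof. rewrite /cross /=; ring. Qed.

Lemma cross0r p : cross p 0 = 0.
Proof. rewrite /cross /=; ring. Qed.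

Lemma crossZr a p q : cross p (scale2 a q) = a * cross p q.
Proof. rewrite /cross /=; ring. Qed.

Lemma crossZl a p q : cross (scale2 a p) q = a * cross p q.
Proof. rewrite /cross /=; ring. Qed.

Lemma cross_plucker p q r x :
  cross q r * cross p x = cross p r * cross q x + cross q p * cross r x.
Proof. rewrite /cross; ring. Qed.

Lemma scale2Dr a p q : scale2 a (p + q) = scale2 a p + scale2 a q.
Proof. by congr pair; rewrite /= mulrDr. Qed.

Lemma scale2Bl a b p : scale2 (a - b) p = scale2 a p - scale2 b p.
Proof. by congr pair; rewrite /= mulrBl. Qed.

Lemma scale2A a b p : scale2 a (scale2 b p) = scale2 (a * b) p.
Proof. by congr pair; rewrite /= mulrA. Qed.

Lemma scale20 p : scale2 0 p = 0.
Proof. by congr pair; rewrite /= mul0r. Qed.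

Lemma scale21 p : scale2 1 p = p.
Proof. by case: p => x y; congr pair; rewrite /= mul1r. Qed.

Lemma scale2r0 a : scale2 a 0 = 0.
Proof. by congr pair; rewrite /= mulr0. Qed.

Lemma scale2_sumr (I : Type) (s : seq I) (P : pred I) (F : I -> R * R) a :
  scale2 a (\sum_(i <- s | P i) F i) = \sum_(i <- s | P i) scale2 a (F i).
Proof. exact: (big_morph _ (scale2Dr a) (scale2r0 a)). Qed.

End Cross.

Section Orthant.
Variable R : realFieldType.
Implicit Types (p q x y z : R * R).

Definition nonneg2 p := 0 <= p.1 /\ 0 <= p.2.
Definition le2 p q := nonneg2 (q - p).

Lemma nonneg2_sum (I : Type) (s : seq I) (P : pred I) (F : I -> R * R) :
  (forall i, P i -> nonneg2 (F i)) -> nonneg2 (\sum_(i <- s | P i) F i).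
Proof.
by move=> h; rewrite /nonneg2 fst_sum snd_sum; split; apply: sumr_ge0 => i /h[].
Qed.

Lemma nonneg2_eq0 x : nonneg2 x -> x.1 + x.2 <= 0 -> x = 0.
Proof. by case: x => a b [/= ha hb] h; congr pair; lra. Qed.

Lemma nonneg2_gt0 x : nonneg2 x -> x != 0 -> 0 < x.1 + x.2.
Proof. by move=> hx; apply: contraNT; rewrite -leNgt => /(nonneg2_eq0 hx) ->. Qed.

(* Angles of nonzero vectors of the closed first quadrant lie in [0, pi/2], so
   the counterclockwise order on them is transitive. *)
Lemma cross_ge0_trans x y z : nonneg2 x -> nonneg2 y -> nonneg2 z -> y != 0 ->
  0 <= cross x y -> 0 <= cross y z -> 0 <= cross x z.
Proof.
case: x y z => [x1 x2] [y1 y2] [z1 z2] [hx1 hx2] hy [hz1 hz2] /(nonneg2_gt0 hy) ys.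
case: hy => /= hy1 hy2; rewrite /cross /= => hxy hyz.
have h1 : 0 <= y1 * (x1 * z2 - x2 * z1).
  have -> : y1 * (x1 * z2 - x2 * z1)
          = x1 * (y1 * z2 - y2 * z1) + z1 * (x1 * y2 - x2 * y1) by ring.
  by rewrite addr_ge0 // mulr_ge0.
have h2 : 0 <= y2 * (x1 * z2 - x2 * z1).
  have -> : y2 * (x1 * z2 - x2 * z1)
          = x2 * (y1 * z2 - y2 * z1) + z2 * (x1 * y2 - x2 * y1) by ring.
  by rewrite addr_ge0 // mulr_ge0.
by rewrite -(pmulr_rge0 _ ys) mulrDl addr_ge0.
Qed.

Lemma cross_eq0_scale2 p q : p.1 + p.2 != 0 -> cross p q = 0 ->
  q = scale2 ((q.1 + q.2) / (p.1 + p.2)) p.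
Proof.
case: p q => [p1 p2] [q1 q2]; rewrite /cross /scale2 /= => hp hc.
congr pair; apply/eqP; rewrite -subr_eq0; apply/eqP.
- have -> : q1 - (q1 + q2) / (p1 + p2) * p1 = - (p1 * q2 - p2 * q1) / (p1 + p2) by field.
  by rewrite hc oppr0 mul0r.
- have -> : q2 - (q1 + q2) / (p1 + p2) * p2 = (p1 * q2 - p2 * q1) / (p1 + p2) by field.
  by rewrite hc mul0r.
Qed.

Lemma nonneg2_cone p q y : nonneg2 p -> nonneg2 q -> 0 < cross p q ->
  0 <= cross y q -> 0 <= cross p y -> nonneg2 y.
Proof.
move=> [p1 p2] [q1 q2] hpq hyq hpy.
have e1 : y.1 * cross p q = cross y q * p.1 + cross p y * q.1 by rewrite /cross; ring.
have e2 : y.2 * cross p q = cross y q * p.2 + cross p y * q.2 by rewrite /cross; ring.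
split; rewrite -(pmulr_lge0 _ hpq) ?e1 ?e2; apply: addr_ge0; exact: mulr_ge0.
Qed.

Definition slope_key p : R := p.2 / (p.1 + p.2).

Lemma slope_key_cross p q : nonneg2 p -> nonneg2 q ->
  slope_key p <= slope_key q -> 0 <= cross p q.
Proof.
move=> hp hq; have [/(nonneg2_eq0 hp) ->|ps] := lerP (p.1 + p.2) 0.
  by rewrite /cross !mul0r subrr.
have [/(nonneg2_eq0 hq) ->|qs] := lerP (q.1 + q.2) 0.
  by rewrite /cross !mulr0 subrr.
rewrite /slope_key ler_pdivrMr // mulrAC ler_pdivlMr // /cross => h; nra.
Qed.

End Orthant.

Section Paths.
Variable R : realFieldType.
Implicit Types (m : nat) (v : nat -> R * R) (a c : R) (P d : R * R).

Definition ccw_sorted m v := forall i j, (i < j)%N -> (j < m)%N -> 0 <= cross (v i) (v j).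

Definition ccw_seq (s : seq (R * R)) := pairwise (fun x y => 0 <= cross x y) s.

(* [P] lies weakly to the left of every edge of the polygonal path [0, v 0, v 0 + v 1, ...]. *)
Definition left_of_path m v P := forall j, (j < m)%N -> 0 <= cross (v j) (P - psum v j).

Definition dominates m v (g : seq (R * R)) :=
  forall k, (k <= size g)%N -> left_of_path m v (psum (nth 0 g) k).

Lemma nonneg2Z a P : 0 <= a -> nonneg2 P -> nonneg2 (scale2 a P).
Proof. by move=> ha [h1 h2]; split; apply: mulr_ge0. Qed.

Lemma ccw_sortedZ m v (c : nat -> R) : (forall j, 0 <= c j) -> ccw_sorted m v ->
  ccw_sorted m (fun j => scale2 (c j) (v j)).
Proof.
by move=> hc sv i j hij hj; rewrite crossZl crossZr !mulr_ge0 //; exact: sv.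
Qed.

Lemma ccw_seq_nth (s : seq (R * R)) : ccw_seq s -> ccw_sorted (size s) (nth 0 s).
Proof.
move=> /(pairwiseP 0) hs i j hij hj; apply: hs => //; rewrite inE //.
exact: ltn_trans hij hj.
Qed.

Lemma left_of_path_combination m v (w : nat -> R) : ccw_sorted m v ->
  (forall j, (j < m)%N -> 0 <= w j <= 1) ->
  left_of_path m v (\sum_(0 <= j < m) scale2 (w j) (v j)).
Proof.
move=> sv hw j hj; rewrite /psum (big_cat_nat (leq0n j) (ltnW hj)) /= addrAC -sumrB.
rewrite crossDr !cross_sumr; apply: addr_ge0.
- rewrite big_nat_cond; apply: sumr_ge0 => i /andP[/andP[_ hi] _].
  have -> : cross (v j) (scale2 (w i) (v i) - v i) = (1 - w i) * cross (v i) (v j).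
    by rewrite /cross /scale2 /=; ring.
  have /andP[_ wi1] := hw i (ltn_trans hi hj).
  by apply: mulr_ge0; [rewrite subr_ge0 | exact: sv].
- rewrite big_nat_cond; apply: sumr_ge0 => i /andP[/andP[hji hi] _].
  rewrite crossZr; have /andP[wi0 _] := hw i hi; apply: mulr_ge0 => //.
  by case: ltngtP hji => // [/sv -> //|<-]; rewrite crossxx.
Qed.

Lemma left_of_path_scale m v a : ccw_sorted m v -> 0 <= a <= 1 ->
  left_of_path m v (scale2 a (psum v m)).
Proof. by move=> sv ha; rewrite scale2_sumr; apply: left_of_path_combination. Qed.

Lemma left_of_path_psum m v p : ccw_sorted m v -> (p <= m)%N -> left_of_path m v (psum v p).
Proof.
move=> sv hp; have -> : psum v p = \sum_(0 <= j < m) scale2 (j < p)%:R (v j).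
  rewrite [RHS](big_cat_nat (leq0n p) hp) /= [X in _ + X]big1_seq ?addr0 => [|i]; last first.
    by move=> /andP[_]; rewrite mem_index_iota => /andP[/leq_gtF -> _]; rewrite scale20.
  by apply: eq_big_seq => i; rewrite mem_index_iota => /andP[_ ->]; rewrite scale21.
by apply: left_of_path_combination => // j _; case: (j < p)%N; rewrite ?ler01 ?lexx.
Qed.

Lemma left_of_pathD m v P d c : left_of_path m v P ->
  (forall j, (j < m)%N -> 0 <= cross (v j) d) -> 0 <= c ->
  left_of_path m v (P + scale2 c d).
Proof.
move=> hP hd hc j hj; rewrite addrAC crossDr crossZr.
by apply: addr_ge0; [exact: hP | apply: mulr_ge0 => //; exact: hd].
Qed.

Lemma cross_psum_ge0 d (s : seq (R * R)) k :
  (forall x, x \in s -> 0 <= cross d x) -> 0 <= cross d (psum (nth 0 s) k).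
Proof.
move=> h; rewrite /psum cross_sumr; apply: sumr_ge0 => i _.
by case: (ltnP i (size s)) => hi; [apply: h; exact: mem_nth | rewrite nth_default ?cross0r].
Qed.

End Paths.

Lemma first_nonpos_step (R : realDomainType) (phi : nat -> R) a b :
  (a < b)%N -> phi b <= 0 ->
  exists p, [/\ (a <= p < b)%N, phi p.+1 <= 0 & p = a \/ 0 < phi p].
Proof.
elim: b => // b IH; rewrite ltnS leq_eqVlt => /orP[/eqP <-|hab] hb.
  by exists a; rewrite leqnn ltnSn; split => //; left.
have [/(IH hab) [p [/andP[hap hpb] hp1 hp]]|hpos] := lerP (phi b) 0.
  by exists p; rewrite hap ltnS ltnW.
by exists b; rewrite (ltnW hab) ltnSn; split => //; right.
Qed.

Section Peel.
Variable R : realFieldType.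
Implicit Types (v : nat -> R * R) (f lam : R).

Definition peel_weight (p : nat) f lam (j : nat) : R :=
  if (j < p)%N then lam else if j == p then lam * f else 0.

Definition path_point v p f := psum v p + scale2 f (v p).

Lemma peel_weight_bounds p f lam j : 0 <= f <= 1 -> 0 <= lam <= 1 ->
  0 <= peel_weight p f lam j <= 1.
Proof.
move=> /andP[f0 f1] /andP[l0 l1]; rewrite /peel_weight.
case: ifP => _; first exact/andP.
case: ifP => _; last by rewrite lexx ler01.
by rewrite mulr_ge0 //= -[1]mulr1 ler_pM.
Qed.

Lemma sum_peel_weight_le v p f lam j : (j <= p)%N ->
  \sum_(0 <= i < j) scale2 (peel_weight p f lam i) (v i) = scale2 lam (psum v j).
Proof.
elim: j => [|j IH] hj; first by rewrite big_geq // psum0 scale2r0.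
by rewrite big_nat_recr //= IH ?(ltnW hj) // psumS scale2Dr /peel_weight hj.
Qed.

Lemma sum_peel_weight_gt v p f lam j : (p < j)%N ->
  \sum_(0 <= i < j) scale2 (peel_weight p f lam i) (v i) = scale2 lam (path_point v p f).
Proof.
elim: j => [|j IH] //; rewrite ltnS leq_eqVlt big_nat_recr //= => /orP[/eqP <-|hpj].
  by rewrite sum_peel_weight_le // /peel_weight ltnn eqxx scale2Dr scale2A.
by rewrite IH // /peel_weight ltnNge (ltnW hpj) /= gtn_eqF // scale20 addr0.
Qed.

Lemma psum_residual v (w : nat -> R) j :
  psum (fun i => scale2 (1 - w i) (v i)) j = psum v j - \sum_(0 <= i < j) scale2 (w i) (v i).
Proof. by rewrite /psum -sumrB; apply: eq_bigr => i _; rewrite scale2Bl scale21. Qed.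

Variables (m : nat) (v : nat -> R * R) (g1 : R * R) (g : seq (R * R)).
Hypothesis v_nonneg : forall j, (j < m)%N -> nonneg2 (v j).
Hypothesis v_sorted : ccw_sorted m v.
Hypothesis g1_nonneg : nonneg2 g1.
Hypothesis g_nonneg : forall x, x \in g -> nonneg2 x.
Hypothesis g1_first : forall x, x \in g -> 0 <= cross g1 x.
Hypothesis g_dominated : dominates m v (g1 :: g).

(* [g1] is the share [lam] of the initial part of the path [v] up to the point
   of parameter [p + f]; [v m] lies past the end of the path, whence
   [p = m -> f = 0]. *)
Definition peel_point p f lam :=
  [/\ (p <= m)%N, 0 <= f <= 1, 0 <= lam <= 1, g1 = scale2 lam (path_point v p f) &
      [/\ p = m -> f = 0, (0 < p)%N -> g1 != 0 &
          forall j, (j < p)%N -> cross (v j) g1 < 0 -> (p < m)%N /\ 0 < cross g1 (v p)]].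

Lemma dominated_tail k j : (k <= size g)%N -> (j < m)%N ->
  0 <= cross (v j) (g1 + psum (nth 0 g) k - psum v j).
Proof. by move=> hk hj; rewrite -psum_cons; apply: g_dominated. Qed.

Lemma cross_first_psum k : 0 <= cross g1 (psum (nth 0 g) k).
Proof. exact: cross_psum_ge0. Qed.

Lemma peel_sum p f lam : peel_point p f lam ->
  \sum_(0 <= j < m) scale2 (peel_weight p f lam j) (v j) = g1.
Proof.
move=> [hpm _ _ hg1 [hpf _ _]]; case: ltngtP hpm => // [hlt|hpm] _.
  by rewrite sum_peel_weight_gt.
by rewrite sum_peel_weight_le -hpm // hg1 hpf // /path_point scale20 addr0.
Qed.

Lemma peel_zero : g1 = 0 -> peel_point 0 0 0.
Proof. by rewrite /peel_point => ->; split; rewrite ?lexx ?ler01 ?scale20. Qed.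

Lemma cross_total_ge0 : psum v m = g1 + \sum_(x <- g) x -> 0 <= cross g1 (psum v m).
Proof.
move=> ->; rewrite crossDr crossxx add0r cross_sumr big_seq.
by apply: sumr_ge0 => x; exact: g1_first.
Qed.

Lemma peel_parallel : g1 != 0 -> psum v m = g1 + \sum_(x <- g) x ->
  (forall j, (j < m)%N -> 0 <= cross (v j) g1) -> exists lam, peel_point m 0 lam.
Proof.
move=> g1nz hsum hall; have hgT := cross_total_ge0 hsum.
have hTg : 0 <= cross (psum v m) g1.
  by rewrite cross_suml big_nat_cond; apply: sumr_ge0 => j /andP[/andP[_ /hall]].
have [s1 s2] : nonneg2 (\sum_(x <- g) x) by rewrite big_seq; exact: nonneg2_sum.
have g1pos := nonneg2_gt0 g1_nonneg g1nz.
have Tpos : 0 < (psum v m).1 + (psum v m).2 by rewrite hsum /=; lra.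
exists ((g1.1 + g1.2) / ((psum v m).1 + (psum v m).2)); split => //.
- by rewrite lexx ler01.
- rewrite divr_ge0 ?(ltW g1pos) ?(ltW Tpos) //= ler_pdivrMr // mul1r hsum /=; lra.
- rewrite /path_point scale20 addr0; apply: cross_eq0_scale2; first by rewrite gt_eqF.
  by apply/eqP; rewrite eq_le hTg andbT -oppr_ge0 -crossC.
- by split => // j /hall; rewrite leNgt => /negPf ->.
Qed.

Lemma peel_at_crossing p : (p < m)%N -> g1 != 0 ->
  0 <= cross (psum v p) g1 -> cross (v p) g1 < 0 -> cross (psum v p.+1) g1 <= 0 ->
  exists f lam, peel_point p f lam.
Proof.
move=> hpm g1nz hphi hc hphi1; set c := cross (v p) g1 in hc hphi1.
have hgT : 0 <= cross (v p) (g1 - psum v p).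
  by have := g_dominated (ltn0Sn (size g)) hpm; rewrite psum_cons psum0 addr0.
have hvT : cross (v p) (psum v p) < 0 by move: hgT; rewrite crossBr -/c; lra.
have [t1 t2] : nonneg2 (psum v p).
  by rewrite /psum big_nat_cond; apply: nonneg2_sum => i /andP[/andP[_ /ltn_trans]]; auto.
have [v1 v2] := v_nonneg hpm.
have Tpos : 0 < (psum v p).1 + (psum v p).2.
  rewrite ltNge; apply: contraTN hvT => /(nonneg2_eq0 (conj t1 t2)) ->.
  by rewrite cross0r ltxx.
pose f := cross (psum v p) g1 / - c.
have f0 : 0 <= f by rewrite divr_ge0 // oppr_ge0 ltW.
have f1 : f <= 1.
  by rewrite ler_pdivrMr ?oppr_gt0 // mul1r; move: hphi1; rewrite psumS crossDl -/c; lra.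
set X := path_point v p f.
have hX : cross X g1 = 0.
  by rewrite /X /path_point crossDl crossZl /f -/c; field; rewrite ?oppr_eq0 ltr0_neq0.
have Xpos : 0 < X.1 + X.2.
  by rewrite /X /path_point /=; have := mulr_ge0 f0 v1; have := mulr_ge0 f0 v2; lra.
pose lam := (g1.1 + g1.2) / (X.1 + X.2).
have hg1 : g1 = scale2 lam X by apply: cross_eq0_scale2; rewrite ?gt_eqF.
have l0 : 0 <= lam by have [? ?] := g1_nonneg; rewrite divr_ge0 ?(ltW Xpos) //; lra.
have l1 : lam <= 1.
  have e : cross (v p) (g1 - psum v p) = (lam - 1) * cross (v p) (psum v p).
    by rewrite {1}hg1 /X /path_point /cross /scale2 /=; ring.
  by move: hgT; rewrite e nmulr_lge0 // subr_le0.
exists f, lam; split; rewrite ?f0 ?f1 ?l0 ?l1 ?(ltnW hpm) //; split => //.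
- by move=> epm; move: hpm; rewrite epm ltnn.
- by move=> j _ _; split => //; rewrite crossC oppr_gt0.
Qed.

Lemma peel_crossing : g1 != 0 -> psum v m = g1 + \sum_(x <- g) x ->
  (exists j, (j < m)%N && (cross (v j) g1 < 0)) -> exists p f lam, peel_point p f lam.
Proof.
move=> g1nz hsum hex; case: (ex_minnP hex) => j0 /andP[hj0m hj0] hmin.
have phi0 : 0 <= cross (psum v j0) g1.
  rewrite cross_suml big_nat_cond; apply: sumr_ge0 => i /andP[/andP[_ hi] _].
  rewrite leNgt; apply/negP => hneg.
  by have := hmin i; rewrite (ltn_trans hi hj0m) hneg leqNgt hi => /(_ isT).
have phim : cross (psum v m) g1 <= 0 by rewrite crossC oppr_le0 cross_total_ge0.
have [p [/andP[hj0p hpm] hp1 [ej0|hp]]] :=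
  @first_nonpos_step _ (fun i => cross (psum v i) g1) _ _ hj0m phim.
  by subst p; exists j0; exact: peel_at_crossing hpm g1nz phi0 hj0 hp1.
exists p; apply: peel_at_crossing => //; first exact: ltW.
by move: hp1; rewrite psumS crossDl; lra.
Qed.

Lemma peel_exists : psum v m = g1 + \sum_(x <- g) x -> exists p f lam, peel_point p f lam.
Proof.
move=> hsum; have [g10|g1nz] := eqVneq g1 0; first by exists 0%N, 0, 0; exact: peel_zero.
have [/existsP [j hj]|/existsPn hall] := boolP [exists j : 'I_m, cross (v j) g1 < 0].
  by apply: peel_crossing => //; exists j; rewrite ltn_ord.
have [lam hlam] : exists lam, peel_point m 0 lam.
  by apply: peel_parallel => // j hj; have := hall (Ordinal hj); rewrite -leNgt.
by exists m, 0, lam.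
Qed.

Section Residual.
Variables (p : nat) (f lam : R).
Hypothesis peel : peel_point p f lam.
Let w := peel_weight p f lam.

Lemma residual_before_flat k j : (j < p)%N -> (j < m)%N -> 0 <= cross (v j) g1 ->
  0 <= cross (v j) (psum (nth 0 g) k + scale2 lam (psum v j) - psum v j).
Proof.
have [_ _ /andP[_ l1] _ [_ g1nz _]] := peel; move=> hjp hj hjg.
have -> : cross (v j) (psum (nth 0 g) k + scale2 lam (psum v j) - psum v j)
    = cross (v j) (psum (nth 0 g) k) + (1 - lam) * cross (v j) (0 - psum v j).
  by rewrite /cross /scale2 /=; ring.
have := left_of_path_psum v_sorted (leq0n m) hj; rewrite psum0 => h0.
have l1' : 0 <= 1 - lam by rewrite subr_ge0.
rewrite addr_ge0 ?mulr_ge0 //; apply: cross_psum_ge0 => x hx.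
apply: (cross_ge0_trans (v_nonneg hj) g1_nonneg (g_nonneg hx) _ hjg (g1_first hx)).
exact/g1nz/(leq_ltn_trans _ hjp).
Qed.

(* Plucker's identity lets the edges [g1] and [v p] certify the steep edge [v j]. *)
Lemma residual_before_steep k j : (k <= size g)%N -> (j < p)%N -> cross (v j) g1 < 0 ->
  0 <= cross (v j) (psum (nth 0 g) k + scale2 lam (psum v j) - psum v j).
Proof.
have [hpm _ /andP[_ l1] hg1 [_ _ hsteep]] := peel; move=> hk hjp hjg.
have [hpm' hgp] := hsteep j hjp hjg; have hjm := ltn_trans hjp hpm'.
set X := path_point v p f; set Y := g1 + psum (nth 0 g) k - X.
have -> : cross (v j) (psum (nth 0 g) k + scale2 lam (psum v j) - psum v j)
    = cross (v j) Y + (1 - lam) * cross (v j) (X - psum v j).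
  by rewrite /Y hg1 /cross /scale2 /=; ring.
have hXT : 0 <= cross (v j) (X - psum v j).
  rewrite /X /path_point addrAC crossDr crossZr addr_ge0 ?mulr_ge0 //.
  - exact: left_of_path_psum v_sorted hpm _ hjm.
  - by have [_ /andP[]] := peel.
  - exact: v_sorted.
have hgY : 0 <= cross g1 Y.
  have -> : cross g1 Y = cross g1 (psum (nth 0 g) k) + cross X g1.
    by rewrite /Y /cross /=; ring.
  by rewrite {2}hg1 crossZr crossxx mulr0 addr0 cross_first_psum.
have hpY : 0 <= cross (v p) Y.
  have -> : cross (v p) Y = cross (v p) (g1 + psum (nth 0 g) k - psum v p).
    by rewrite /Y /X /path_point /cross /scale2 /=; ring.
  exact: dominated_tail.
have : 0 <= cross g1 (v p) * cross (v j) Y.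
  rewrite cross_plucker addr_ge0 ?mulr_ge0 //; first exact: v_sorted.
  by rewrite crossC oppr_ge0 ltW.
have l1' : 0 <= 1 - lam by rewrite subr_ge0.
by rewrite pmulr_rge0 // => hY; rewrite addr_ge0 ?mulr_ge0.
Qed.

Lemma residual_ge0 k j : (k <= size g)%N -> (j < m)%N ->
  0 <= cross (v j) (psum (nth 0 g) k + \sum_(0 <= i < j) scale2 (w i) (v i) - psum v j).
Proof.
have [_ _ _ hg1 _] := peel; move=> hk hj.
case: (ltngtP j p) hj => [hjp|hpj|->] hj.
- rewrite sum_peel_weight_le ?(ltnW hjp) //.
  have [/(residual_before_flat k hjp hj)|] := lerP 0 (cross (v j) g1) => //.
  exact: residual_before_steep.
- by rewrite sum_peel_weight_gt // -hg1 [_ + g1]addrC; exact: dominated_tail.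
- have -> : cross (v p) (psum (nth 0 g) k + \sum_(0 <= i < p) scale2 (w i) (v i) - psum v p)
      = cross (v p) (g1 + psum (nth 0 g) k - psum v p).
    by rewrite sum_peel_weight_le // hg1 /path_point /cross /scale2 /=; ring.
  exact: dominated_tail.
Qed.

Lemma residual_dominates : dominates m (fun j => scale2 (1 - w j) (v j)) g.
Proof.
have [_ hf hl _ _] := peel; move=> k hk j hj.
rewrite psum_residual crossZl opprB addrA mulr_ge0 ?residual_ge0 //.
by have /andP[_] := peel_weight_bounds p j hf hl; rewrite subr_ge0.
Qed.

End Residual.
End Peel.

Section Transport.
Variable R : realFieldType.
Implicit Types (m : nat) (v : nat -> R * R) (g : seq (R * R)).

Definition transport_plan m v g (W : nat -> nat -> R) :=
  [/\ forall j l, (j < m)%N -> (l < size g)%N -> 0 <= W j l,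
      forall j, (j < m)%N -> \sum_(0 <= l < size g) W j l = 1 &
      forall l, (l < size g)%N -> \sum_(0 <= j < m) scale2 (W j l) (v j) = nth 0 g l].

Lemma transport_plan1 m v x : psum v m = x -> transport_plan m v [:: x] (fun _ _ => 1).
Proof.
move=> hx; split => [j l _ _|j _|[|//] _]; rewrite ?ler01 ?big_nat1 //= -hx.
by apply: eq_bigr => j _; rewrite scale21.
Qed.

Lemma transport_plan_cons m v (w : nat -> R) x g W :
  (forall j, 0 <= w j <= 1) -> \sum_(0 <= j < m) scale2 (w j) (v j) = x ->
  transport_plan m (fun j => scale2 (1 - w j) (v j)) g W ->
  transport_plan m v (x :: g) (fun j l => if l is l'.+1 then (1 - w j) * W j l' else w j).
Proof.
move=> hw hx [W0 Wrow Wcol]; have w1 j : 0 <= 1 - w j by have /andP[_] := hw j; rewrite subr_ge0.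
split => [j [|l] hj hl /=|j hj|[|l] hl /=] //.
- by have /andP[] := hw j.
- by rewrite mulr_ge0 ?W0.
- by rewrite big_nat_recl //= -mulr_sumr Wrow // mulr1 addrC subrK.
- by rewrite -(Wcol l hl); apply: eq_bigr => j _; rewrite scale2A mulrC.
Qed.

(* Carve the first edge of [g] out of the path [v], then transport the rest of
   [g] onto the residual path. *)
Theorem chain_transport g m v : (0 < size g)%N ->
  (forall j, (j < m)%N -> nonneg2 (v j)) -> ccw_sorted m v ->
  (forall x, x \in g -> nonneg2 x) -> ccw_seq g -> dominates m v g ->
  psum v m = \sum_(x <- g) x -> exists W, transport_plan m v g W.
Proof.
elim: g m v => [|g1 g IH] m v // _ hv sv hg /andP[/allP g1_first sg] hdom.
have g1n : nonneg2 g1 by apply: hg; rewrite mem_head.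
have gn x : x \in g -> nonneg2 x by move=> hx; apply: hg; rewrite inE hx orbT.
case: g IH hg gn g1_first sg hdom => [|g2 g] IH hg gn g1_first sg hdom hsum.
  by exists (fun _ _ => 1); apply: transport_plan1; rewrite hsum big_seq1.
rewrite big_cons in hsum.
have [p [f [lam hpeel]]] : exists p f lam, peel_point m v g1 p f lam.
  exact: peel_exists hsum.
set w := peel_weight p f lam.
have [hpm hf hl _ _] := hpeel.
have hw j : 0 <= w j <= 1 by exact: peel_weight_bounds.
have w1 j : 0 <= 1 - w j by have /andP[_] := hw j; rewrite subr_ge0.
have [W hW] : exists W, transport_plan m (fun j => scale2 (1 - w j) (v j)) (g2 :: g) W.
  apply: IH => //.
  - by move=> j hj; apply: nonneg2Z => //; exact: hv.
  - exact: ccw_sortedZ.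
  - exact: residual_dominates hpeel.
  - by rewrite psum_residual (peel_sum hpeel) hsum addrC addKr.
by eexists; apply: transport_plan_cons hW => //; exact: peel_sum.
Qed.

End Transport.

Lemma argmin_seq (T : eqType) d (X : orderType d) (s : seq T) (F : T -> X) :
  s != [::] -> exists2 c, c \in s & forall x, x \in s -> (F c <= F x)%O.
Proof.
elim: s => // a s IH _; have [->|/IH [c hc hmin]] := eqVneq s [::].
  by exists a; rewrite ?mem_seq1 // => x; rewrite mem_seq1 => /eqP ->.
have [hac|hca] := leP (F a) (F c).
  exists a; rewrite ?mem_head // => x; rewrite inE => /orP[/eqP -> //|/hmin].
  exact: le_trans.
exists c; rewrite ?inE ?hc ?orbT // => x; rewrite inE => /orP[/eqP ->|/hmin //].
exact: ltW.
Qed.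

Lemma size_filter_lt (T : eqType) (a : pred T) (s : seq T) x :
  x \in s -> ~~ a x -> (size (filter a s) < size s)%N.
Proof.
move=> hx hn; rewrite size_filter -(count_predC a s) -{1}[count a s]addn0 ltn_add2l.
by rewrite -has_count; apply/hasP; exists x.
Qed.

Section HullChain.
Variable R : realFieldType.
Implicit Types (A B C P Q u d : R * R) (S ch : seq (R * R)).

Definition pos_edges ch := forall e, e \in ch -> nonneg2 e /\ e != 0.

(* [ch] lists the edges of the boundary, right of [AB], of the convex hull of
   [A], [B] and [S]. *)
Definition hull_chain A B S ch :=
  [/\ \sum_(x <- ch) x = B - A, pos_edges ch, ccw_seq ch,
      forall k, (k <= size ch)%N -> A + psum (nth 0 ch) k \in [:: A, B & S] &
      forall P, P \in S -> left_of_path (size ch) (nth 0 ch) (P - A)].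

Lemma hull_chain_nil A B : le2 A B -> B != A -> hull_chain A B [::] [:: B - A].
Proof.
move=> hAB hBA; split => //.
- by rewrite big_seq1.
- by move=> e; rewrite mem_seq1 => /eqP ->; rewrite subr_eq0.
- case=> [|[|//]] _; first by rewrite psum0 addr0 mem_head.
  by rewrite psum_cons psum0 addr0 addrC subrK !inE eqxx orbT.
Qed.

Lemma left_of_path_cat ch1 ch2 Q :
  left_of_path (size ch1) (nth 0 ch1) Q ->
  left_of_path (size ch2) (nth 0 ch2) (Q - \sum_(x <- ch1) x) ->
  left_of_path (size (ch1 ++ ch2)) (nth 0 (ch1 ++ ch2)) Q.
Proof.
move=> h1 h2 j; rewrite size_cat nth_cat => hj; case: ltnP => hj1.
  by rewrite psum_catl ?(ltnW hj1) //; exact: h1.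
rewrite -(subnKC hj1) psum_catr opprD addrA addKn; apply: h2.
by rewrite ltn_subLR.
Qed.

Lemma left_of_chain_wedge ch u d Q : \sum_(x <- ch) x = u -> ccw_seq ch ->
  (forall e, e \in ch -> 0 <= cross e d) -> 0 < cross u d ->
  0 <= cross Q d <= cross u d -> 0 <= cross u Q ->
  left_of_path (size ch) (nth 0 ch) Q.
Proof.
move=> hsum hs hd hud /andP[hQd0 hQd1] huQ.
have -> : Q = scale2 (cross Q d / cross u d) u + scale2 (cross u Q / cross u d) d.
  have hD : u.1 * d.2 - u.2 * d.1 != 0 by exact: lt0r_neq0 hud.
  by apply: injective_projections; rewrite /= /cross; field; exact: hD.
have hud0 := ltW hud; apply: left_of_pathD; last by rewrite divr_ge0.
- rewrite -[X in scale2 _ X]hsum -psum_size.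
  apply: left_of_path_scale; first exact: ccw_seq_nth.
  by rewrite divr_ge0 //= ler_pdivrMr // mul1r.
- by move=> j hj; apply: hd; exact: mem_nth.
Qed.

Lemma hull_chain_nonnil A B S ch : hull_chain A B S ch -> B != A -> (0 < size ch)%N.
Proof.
case: ch => // [[hsum _ _ _ _]]; apply: contraNT => _.
by rewrite -subr_eq0 -hsum big_nil.
Qed.

Lemma hull_chain_edges_cw A C S1 ch b : hull_chain A C S1 ch -> C != A -> nonneg2 b ->
  0 <= cross b (A - C) -> (forall P, P \in S1 -> 0 <= cross b (P - C)) ->
  forall e, e \in ch -> 0 <= cross e b.
Proof.
move=> hch hCA hb hA hS1; have ht := hull_chain_nonnil hch hCA.
case: hch => hsum he hs hV _; set t := size ch in ht hV *.
set el := nth 0 ch t.-1; have elin : el \in ch by rewrite mem_nth // prednK.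
have hel : el = C - (A + psum (nth 0 ch) t.-1).
  have e := psumS (nth 0 ch) t.-1; rewrite prednK // psum_size hsum in e.
  by rewrite opprD addrA e addrAC subrr add0r.
have elb : 0 <= cross el b.
  have -> : cross el b = cross b (A + psum (nth 0 ch) t.-1 - C) by rewrite hel /cross /=; ring.
  have := hV t.-1 (leq_pred t); rewrite !inE => /or3P[/eqP ->|/eqP ->|/hS1] //.
  by rewrite subrr cross0r.
move=> e /(nthP 0) [i hi <-]; have [lt_i|ge_i] := ltnP i t.-1.
  have [hel0 helnz] := he _ elin.
  apply: (cross_ge0_trans _ hel0 hb helnz _ elb); first by case: (he _ (mem_nth 0 hi)).
  by apply: (ccw_seq_nth hs) => //; rewrite prednK.
suff -> : i = t.-1 by [].
by apply/eqP; rewrite eqn_leq ge_i andbT -ltnS prednK.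
Qed.

Lemma hull_chain_edges_ccw C B S2 ch b : hull_chain C B S2 ch -> B != C -> nonneg2 b ->
  0 <= cross b (B - C) -> (forall P, P \in S2 -> 0 <= cross b (P - C)) ->
  forall e, e \in ch -> 0 <= cross b e.
Proof.
move=> hch hBC hb hB hS2; have ht := hull_chain_nonnil hch hBC.
case: hch => hsum he hs hV _.
set ef := nth 0 ch 0; have efin : ef \in ch by rewrite mem_nth.
have bef : 0 <= cross b ef.
  have -> : ef = C + psum (nth 0 ch) 1 - C by rewrite psumS psum0 add0r addrC addKr.
  have := hV 1%N ht; rewrite !inE => /or3P[/eqP ->|/eqP ->|/hS2] //.
  by rewrite subrr cross0r.
move=> e /(nthP 0) [[|i] hi <-] //; have [hef0 hefnz] := he _ efin.
apply: (cross_ge0_trans hb hef0 _ hefnz bef); first by case: (he _ (mem_nth 0 hi)).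
exact: (ccw_seq_nth hs).
Qed.

Section HullStep.
Variables (A B C : R * R) (S : seq (R * R)).
Hypothesis AB : le2 A B.
Hypothesis S_right : forall P, P \in S -> [/\ le2 A P, le2 P B & cross (B - A) (P - A) < 0].
Hypothesis C_in : C \in S.
Hypothesis C_min : forall P, P \in S -> cross (B - A) (C - A) <= cross (B - A) (P - A).
Let S1 := [seq P <- S | cross (C - A) (P - A) < 0].
Let S2 := [seq P <- S | cross (B - C) (P - C) < 0].

Lemma pivot_farthest P : P \in S -> 0 <= cross (B - A) (P - C).
Proof.
move=> hP; have -> : P - C = (P - A) - (C - A) by rewrite opprB addrA subrK.
by rewrite crossBr subr_ge0 C_min.
Qed.

Lemma pivot_cross_AC_gt0 : 0 < cross (C - A) (B - A).
Proof. by have [_ _ h] := S_right C_in; rewrite crossC oppr_gt0. Qed.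

Lemma pivot_cross_CB_gt0 : 0 < cross (B - A) (B - C).
Proof.
have -> : B - C = (B - A) - (C - A) by rewrite opprB addrA subrK.
by rewrite crossBr crossxx sub0r -crossC pivot_cross_AC_gt0.
Qed.

Lemma right_of_AC P : P \in S1 -> [/\ le2 A P, le2 P C & cross (C - A) (P - A) < 0].
Proof.
rewrite mem_filter => /andP[hPC hP]; have [hAP _ _] := S_right hP; split => //.
have [hAC _ _] := S_right C_in; apply: (nonneg2_cone hAC AB pivot_cross_AC_gt0).
- by rewrite -(opprB P C) crossC crossNr opprK pivot_farthest.
- have -> : C - P = (C - A) - (P - A) by rewrite opprB addrA subrK.
  by rewrite crossBr crossxx sub0r oppr_ge0 ltW.
Qed.

Lemma right_of_CB P : P \in S2 -> [/\ le2 C P, le2 P B & cross (B - C) (P - C) < 0].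
Proof.
rewrite mem_filter => /andP[hPC hP]; have [_ hPB _] := S_right hP; split => //.
have [_ hCB _] := S_right C_in; apply: (nonneg2_cone AB hCB pivot_cross_CB_gt0).
- by rewrite crossC oppr_ge0 ltW.
- exact: pivot_farthest.
Qed.

Variables (ch1 ch2 : seq (R * R)).
Hypothesis ch1_hull : hull_chain A C S1 ch1.
Hypothesis ch2_hull : hull_chain C B S2 ch2.

Lemma pivot_neq_A : C != A.
Proof.
by apply: contraTneq pivot_cross_AC_gt0 => ->; rewrite subrr /cross /= !mul0r subrr ltxx.
Qed.

Lemma pivot_neq_B : B != C.
Proof. by apply: contraTneq pivot_cross_CB_gt0 => ->; rewrite subrr cross0r ltxx. Qed.

Lemma first_part_cw e : e \in ch1 -> 0 <= cross e (B - A).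
Proof.
apply: (hull_chain_edges_cw ch1_hull pivot_neq_A AB).
- by rewrite -(opprB C A) crossNr oppr_ge0 crossC oppr_le0 (ltW pivot_cross_AC_gt0).
- by move=> P; rewrite mem_filter => /andP[_]; exact: pivot_farthest.
Qed.

Lemma second_part_ccw e : e \in ch2 -> 0 <= cross (B - A) e.
Proof.
apply: (hull_chain_edges_ccw ch2_hull pivot_neq_B AB (ltW pivot_cross_CB_gt0)).
by move=> P; rewrite mem_filter => /andP[_]; exact: pivot_farthest.
Qed.

Lemma left_of_first_part P : P \in S -> left_of_path (size ch1) (nth 0 ch1) (P - A).
Proof.
have [h1sum _ h1s _ h1P] := ch1_hull; move=> hP.
have [hPS1|hPS1] := boolP (P \in S1); first exact: h1P.
have [_ _ hPA] := S_right hP.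
apply: (left_of_chain_wedge h1sum h1s first_part_cw pivot_cross_AC_gt0).
- by rewrite !(crossC _ (B - A)) lerN2 C_min // oppr_ge0 ltW.
- by move: hPS1; rewrite mem_filter hP andbT -leNgt.
Qed.

Lemma left_of_second_part P : P \in S -> left_of_path (size ch2) (nth 0 ch2) (P - C).
Proof.
have [h2sum _ h2s _ h2P] := ch2_hull; move=> hP.
have [hPS2|hPS2] := boolP (P \in S2); first exact: h2P.
have [_ _ hPA] := S_right hP.
apply: (left_of_chain_wedge (d := - (B - A)) h2sum h2s).
- by move=> e /second_part_ccw; rewrite crossNr -crossC.
- by rewrite crossNr -crossC pivot_cross_CB_gt0.
- rewrite !crossNr -!crossC pivot_farthest //= -subr_ge0 -crossBr.
  have -> : B - C - (P - C) = (B - A) - (P - A) by rewrite opprB addrA subrK opprB addrA subrK.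
  by rewrite crossBr crossxx sub0r oppr_ge0 ltW.
- by move: hPS2; rewrite mem_filter hP andbT -leNgt.
Qed.

Lemma hull_chain_cat : hull_chain A B S (ch1 ++ ch2).
Proof.
have [h1sum h1e h1s h1V _] := ch1_hull; have [h2sum h2e h2s h2V _] := ch2_hull.
split.
- by rewrite big_cat /= h1sum h2sum addrC addrA subrK.
- by move=> e; rewrite mem_cat => /orP[/h1e|/h2e].
- move: h1s h2s; rewrite /ccw_seq pairwise_cat => -> ->; rewrite !andbT.
  apply/allrelP => x y hx hy.
  have [hx0 _] := h1e x hx; have [hy0 _] := h2e y hy.
  apply: (cross_ge0_trans hx0 AB hy0 _ (first_part_cw hx) (second_part_ccw hy)).
  have [_ _ hC] := S_right C_in; apply: contraTneq hC => ->.
  by rewrite /cross /= !mul0r subrr ltxx.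
- move=> k; rewrite size_cat => hk; rewrite !inE.
  have [hk1|hk1] := leqP k (size ch1).
    rewrite psum_catl //; have := h1V k hk1; rewrite !inE.
    case/or3P=> [/eqP ->|/eqP ->|]; rewrite ?eqxx ?C_in ?orbT //.
    by rewrite mem_filter => /andP[_ ->]; rewrite !orbT.
  have hk2 : (k - size ch1 <= size ch2)%N by rewrite leq_subLR.
  rewrite -(subnKC (ltnW hk1)) psum_catr h1sum addrA [A + _]addrC subrK.
  have := h2V _ hk2; rewrite !inE.
  case/or3P=> [/eqP ->|/eqP ->|]; rewrite ?eqxx ?C_in ?orbT //.
  by rewrite mem_filter => /andP[_ ->]; rewrite !orbT.
- move=> P hP; apply: left_of_path_cat; first exact: left_of_first_part.
  by rewrite h1sum opprB addrA subrK; exact: left_of_second_part.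
Qed.

End HullStep.

(* Quickhull: split at the point [C] of [S] farthest to the right of [AB] and
   recurse on the points right of [AC] and right of [CB]. *)
Theorem hull_chain_exists A B S : le2 A B -> B != A ->
  (forall P, P \in S -> [/\ le2 A P, le2 P B & cross (B - A) (P - A) < 0]) ->
  exists ch, hull_chain A B S ch.
Proof.
move: {2}(size S) (leqnn (size S)) => n; elim: n A B S => [|n IH] A B S hS AB BA hS_right.
  by case: S hS hS_right => // _ _; exists [:: B - A]; exact: hull_chain_nil.
have [-> |hne] := eqVneq S [::]; first by exists [:: B - A]; exact: hull_chain_nil.
have [C C_in C_min] := argmin_seq (fun P => cross (B - A) (P - A)) hne.
have [AC CB _] := hS_right C C_in.
have CA := pivot_neq_A hS_right C_in; have BC := pivot_neq_B hS_right C_in.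
have [ch1 h1] : exists ch, hull_chain A C [seq P <- S | cross (C - A) (P - A) < 0] ch.
  apply: IH => //; last exact: (right_of_AC AB hS_right C_in C_min).
  by rewrite -ltnS (leq_trans _ hS) // (size_filter_lt C_in) //= crossxx ltxx.
have [ch2 h2] : exists ch, hull_chain C B [seq P <- S | cross (B - C) (P - C) < 0] ch.
  apply: IH => //; last exact: (right_of_CB AB hS_right C_in C_min).
  by rewrite -ltnS (leq_trans _ hS) // (size_filter_lt C_in) //= subrr cross0r ltxx.
by exists (ch1 ++ ch2); exact: (hull_chain_cat AB hS_right C_in C_min h1 h2).
Qed.
End HullChain.

Lemma big_perm_index (T : finType) (V : nmodType) (x0 : T) (t : seq T) (F : nat -> T -> V) :
  perm_eq t (enum T) -> \sum_(c : T) F (index c t) c = \sum_(0 <= l < #|T|) F l (nth x0 t l).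
Proof.
move=> pt; have ut : uniq t by rewrite (perm_uniq pt) enum_uniq.
rewrite (eq_bigl (fun c => c \in t)) => [|c]; last by rewrite (perm_mem pt) mem_enum.
rewrite -big_uniq // (big_nth x0) cardE -(perm_size pt).
by apply: eq_big_nat => l /andP[_ hl]; rewrite index_uniq.
Qed.

Lemma perm_enum_I2 :
  perm_eq [:: ord0; ord_max] (enum 'I_2) /\ perm_eq [:: ord_max; ord0] (enum 'I_2).
Proof.
have hmem (c : 'I_2) : c \in [:: ord0; ord_max].
  by rewrite !inE; case: c => [[|[|//]] ?]; rewrite -!val_eqE.
split; apply: uniq_perm; rewrite ?enum_uniq // => c; rewrite mem_enum.
  exact: hmem.
by have := hmem c; rewrite !inE orbC.
Qed.

Section Channels.
Variable R : realType.
Implicit Types (ch S : seq (R * R)) (P : R * R).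

Definition col k (A : 'M[R]_(2, k)) (j : 'I_k) : R * R := (A ord0 j, A ord_max j).

Definition chain_mx ch : 'M[R]_(2, size ch) :=
  \matrix_(i, j) if i == ord0 then (nth 0 ch j).1 else (nth 0 ch j).2.

Lemma col_chain_mx ch j : col (chain_mx ch) j = nth 0 ch j.
Proof. by rewrite /col !mxE; case: (nth 0 ch j). Qed.

Lemma map_col_chain_mx ch : [seq col (chain_mx ch) j | j <- enum 'I_(size ch)] = ch.
Proof.
rewrite -[RHS](mkseq_nth 0) /mkseq -val_enum_ord -map_comp.
by apply: eq_map => j; rewrite /= col_chain_mx.
Qed.

Lemma ord2P (i : 'I_2) : i = ord0 \/ i = ord_max.
Proof. by case: i => [[|[|//]] ?]; [left|right]; apply: val_inj. Qed.

Lemma col_inj k (A B : 'M[R]_(2, k)) : (forall j, col A j = col B j) -> A = B.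
Proof. by move=> h; apply/matrixP => i j; have [e1 e2] := h j; case: (ord2P i) => ->. Qed.

Lemma col_mulmx k l (A : 'M[R]_(2, k)) (W : 'M[R]_(k, l)) c :
  col (A *m W) c = \sum_(j < k) scale2 (W j c) (col A j).
Proof.
apply: injective_projections; rewrite /= ?fst_sum ?snd_sum !mxE.
  by apply: eq_bigr => j _; rewrite mulrC.
by apply: eq_bigr => j _; rewrite mulrC.
Qed.

Lemma row_stochastic_le1 k l (W : 'M[R]_(k, l)) i j : row_stochastic W -> W i j <= 1.
Proof.
move=> [W0 W1]; rewrite -(W1 i) (bigD1 j) //= lerDl.
by apply: sumr_ge0 => ? _; exact: W0.
Qed.

Lemma channel_col_nonneg k (A : 'M[R]_(2, k)) j : channel2 A -> nonneg2 (col A j).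
Proof. by move=> [h _]; split; apply: h. Qed.

Lemma channel_col_le1 k (A : 'M[R]_(2, k)) j : channel2 A -> le2 (col A j) (1, 1).
Proof. by move=> hA; split; rewrite /= subr_ge0; exact: row_stochastic_le1 hA. Qed.

Lemma channel_sum_cols k (A : 'M[R]_(2, k)) : channel2 A -> \sum_(j < k) col A j = (1, 1).
Proof.
move=> [_ h1]; apply: injective_projections; rewrite /= ?fst_sum ?snd_sum.
  exact: h1 ord0.
exact: h1 ord_max.
Qed.

Lemma chain_mx_channel ch : \sum_(x <- ch) x = (1, 1) ->
  (forall e, e \in ch -> nonneg2 e) -> channel2 (chain_mx ch).
Proof.
move=> hsum hch; split => [i j|i]; rewrite ?mxE.
  by have [h1 h2] := hch _ (mem_nth 0 (ltn_ord j)); case: ifP.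
under eq_bigr do rewrite mxE.
case: (ord2P i) => -> /=.
  by have := congr1 fst hsum; rewrite fst_sum (big_nth 0) big_mkord.
by have := congr1 snd hsum; rewrite snd_sum (big_nth 0) big_mkord.
Qed.

(* [s] and [t] list the columns of [C] and [C'] in the order used by the plan. *)
Lemma plan_refines m k (C : 'M[R]_(2, m)) (C' : 'M[R]_(2, k)) (i0 : 'I_m) (c0 : 'I_k)
    (s : seq 'I_m) (t : seq 'I_k) v W :
  perm_eq s (enum 'I_m) -> perm_eq t (enum 'I_k) ->
  (forall j, (j < m)%N -> v j = col C (nth i0 s j)) ->
  transport_plan m v [seq col C' c | c <- t] W -> refines C C'.
Proof.
move=> ps pt hv [W0 Wrow Wcol]; rewrite size_map in W0 Wrow Wcol.
have st : size t = k by rewrite (perm_size pt) size_enum_ord.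
have ss : size s = m by rewrite (perm_size ps) size_enum_ord.
have si i : (index i s < m)%N.
  by have := index_mem i s; rewrite ss (perm_mem ps) mem_enum.
have ti c : (index c t < size t)%N by rewrite index_mem (perm_mem pt) mem_enum.
exists (\matrix_(i, c) W (index i s) (index c t)); split; first split.
- by move=> i c; rewrite mxE; exact: W0.
- move=> i; rewrite -(Wrow _ (si i)) st -[k in RHS]card_ord.
  under eq_bigr do rewrite mxE.
  exact: (@big_perm_index _ _ c0 t (fun l _ => W (index i s) l)).
- apply: col_inj => c; rewrite col_mulmx; under eq_bigr do rewrite mxE.
  rewrite (@big_perm_index _ _ i0 s (fun l i => scale2 (W l (index c t)) (col C i))) //.
  rewrite card_ord (eq_big_nat _ _ (F2 := fun l => scale2 (W l (index c t)) (v l))).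
    have ct : c \in t by rewrite (perm_mem pt) mem_enum.
    rewrite (Wcol _ (ti c)); transitivity (col C' (nth c0 t (index c t))).
      by apply: nth_map; rewrite index_mem.
    by rewrite nth_index.
  by move=> l /andP[_ hl]; rewrite hv.
Qed.

Lemma diagonal_left_of_hull ch S P : hull_chain 0 (1, 1) S ch ->
  nonneg2 P -> le2 P (1, 1) -> cross (1, 1) P = 0 -> left_of_path (size ch) (nth 0 ch) P.
Proof.
move=> [hsum _ hs _ _] [p1 p2] [/= q1 q2] hP.
have -> : P = scale2 ((P.1 + P.2) / (1 + 1)) (psum (nth 0 ch) (size ch)).
  rewrite psum_size hsum subr0; apply: (@cross_eq0_scale2 _ (1, 1) P) => //=.
  by apply: lt0r_neq0; lra.
apply: (@left_of_path_scale _ (size ch) (nth 0 ch)); first exact: ccw_seq_nth.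
rewrite divr_ge0 ?addr_ge0 //= ler_pdivrMr ?mul1r; lra.
Qed.

Lemma hull_dominates_channel ch S (M : 'M[R]_(2, 2)) c0 c1 :
  hull_chain 0 (1, 1) S ch -> channel2 M ->
  (forall c, cross (1, 1) (col M c) < 0 -> col M c \in S) ->
  col M c0 + col M c1 = (1, 1) -> 0 <= cross (col M c0) (col M c1) ->
  dominates (size ch) (nth 0 ch) [:: col M c0; col M c1].
Proof.
move=> hch hM hS hLU1 hLU; have [hsum _ hs _ hleft] := hch.
have sv := ccw_seq_nth hs.
case=> [|[|[|//]]] _; rewrite ?psum_cons psum0 ?addr0.
- by have := left_of_path_psum sv (leq0n _); rewrite psum0.
- have [/hS/hleft|] := ltrP (cross (1, 1) (col M c0)) 0; first by rewrite subr0.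
  move=> h0; apply: (diagonal_left_of_hull hch).
  - exact: channel_col_nonneg.
  - exact: channel_col_le1.
  apply/eqP; rewrite eq_le h0 andbT -hLU1 crossC oppr_le0 crossDr crossxx add0r //.
- by rewrite hLU1 -(subr0 (1, 1)) -hsum -psum_size; exact: left_of_path_psum.
Qed.

Lemma chain_refines_channel ch S (M : 'M[R]_(2, 2)) :
  hull_chain 0 (1, 1) S ch -> channel2 M ->
  (forall c, cross (1, 1) (col M c) < 0 -> col M c \in S) -> refines (chain_mx ch) M.
Proof.
move=> hch hM hS; have [p01 p10] := perm_enum_I2.
have [c0 [c1 [pt hLU]]] :
    exists c0 c1, perm_eq [:: c0; c1] (enum 'I_2) /\ 0 <= cross (col M c0) (col M c1).
  have [h|h] := lerP 0 (cross (col M ord0) (col M ord_max)); first by exists ord0, ord_max.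
  by exists ord_max, ord0; rewrite crossC oppr_ge0 ltW.
have hLU1 : col M c0 + col M c1 = (1, 1).
  rewrite -(channel_sum_cols hM) (@big_perm_index _ _ c0 _ (fun _ c => col M c) pt).
  by rewrite card_ord big_nat_recl // big_nat1.
have ht : (0 < size ch)%N.
  by apply: (hull_chain_nonnil hch); apply/eqP => /(congr1 fst)/eqP; rewrite oner_eq0.
have [hsum hpos hs _ _] := hch.
have [W hW] : exists W, transport_plan (size ch) (nth 0 ch) [:: col M c0; col M c1] W.
  apply: chain_transport => //.
  - by move=> j hj; have [] := hpos _ (mem_nth 0 hj).
  - exact: ccw_seq_nth.
  - by move=> x; rewrite !inE => /orP[] /eqP ->; exact: channel_col_nonneg.
  - by rewrite /ccw_seq /= hLU.
  - exact: (hull_dominates_channel hch hM hS hLU1 hLU).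
  - by rewrite psum_size hsum subr0 big_cons big_seq1.
apply: (plan_refines (i0 := Ordinal ht) c0 (perm_refl _) pt _ hW) => j hj.
by rewrite col_chain_mx nth_enum_ord.
Qed.

Lemma channel_refines_chain ch S h (H : 'M[R]_(2, h)) :
  hull_chain 0 (1, 1) S ch -> channel2 H ->
  (forall P, P \in S -> exists2 w : 'I_h -> R,
     (forall i, 0 <= w i <= 1) & P = \sum_(i < h) scale2 (w i) (col H i)) ->
  refines H (chain_mx ch).
Proof.
move=> hch hH hS; have [hsum hpos hs hV _] := hch.
have hh : (0 < h)%N.
  case: h H hH {hS} => // H /channel_sum_cols; rewrite big_ord0.
  by move=> /(congr1 fst)/eqP; rewrite eq_sym oner_eq0.
have ht : (0 < size ch)%N.
  by apply: (hull_chain_nonnil hch); apply/eqP => /(congr1 fst)/eqP; rewrite oner_eq0.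
pose i0 := Ordinal hh; pose key i := slope_key (col H i).
pose s := sort (fun i j => key i <= key j) (enum 'I_h).
have ps : perm_eq s (enum 'I_h) by rewrite perm_sort.
have sv : ccw_sorted h (fun j => col H (nth i0 s j)).
  move=> i j hij hj; apply: slope_key_cross; try exact: channel_col_nonneg.
  have htr : transitive (fun a b => key a <= key b) by move=> b a c; exact: le_trans.
  have := sort_sorted (fun a b => le_total (key a) (key b)) (enum 'I_h).
  move/(sorted_ltn_nth htr i0); apply; rewrite -?topredE /= ?size_sort ?size_enum_ord //.
  exact: ltn_trans hij hj.
have sum_s (F : 'I_h -> R * R) : \sum_(i < h) F i = \sum_(0 <= j < h) F (nth i0 s j).
  by rewrite (@big_perm_index _ _ i0 _ (fun _ i => F i) ps) card_ord.
have [W hW] : exists W, transport_plan h (fun j => col H (nth i0 s j)) ch W.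
  apply: chain_transport => //.
  - by move=> j _; exact: channel_col_nonneg.
  - by move=> x /hpos [].
  - move=> k hk; have := hV k hk; rewrite add0r !inE => /or3P[/eqP ->|/eqP ->|/hS [w hw ->]].
    + by have := left_of_path_psum sv (leq0n h); rewrite psum0.
    + by rewrite -(channel_sum_cols hH) sum_s; exact: left_of_path_psum.
    + by rewrite sum_s; apply: left_of_path_combination.
  - by rewrite /psum -(sum_s (col H)) channel_sum_cols // hsum subr0.
move: hW; rewrite -{1}(map_col_chain_mx ch) => hW.
by apply: (plan_refines (i0 := i0) (Ordinal ht) ps (perm_refl _) _ hW).
Qed.
End Channels.

Theorem mainTheorem12 (R : realType) (n : nat) (hn : (1 <= n)%N)
    (M : 'I_n -> 'M[R]_(2, 2)) (hM : forall i, channel2 (M i)) :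
  exists (g : nat) (G : 'M[R]_(2, g)), is_glb2 M G.
Proof.
pose S := [seq P <- [seq col (M i) c | i <- enum 'I_n, c <- enum 'I_2] | cross (1, 1) P < 0].
have [ch hch] : exists ch, hull_chain 0 (1, 1) S ch.
  apply: hull_chain_exists.
  - by split; rewrite /= subr0 ler01.
  - by apply/eqP => /(congr1 fst)/eqP; rewrite oner_eq0.
  - move=> P; rewrite mem_filter => /andP[hP /allpairsP [[i c] [_ _ /= eP]]]; subst P.
    rewrite /le2 !subr0; split => //; first exact: channel_col_nonneg (hM i).
    exact: channel_col_le1 (hM i).
have [hsum hpos _ _ _] := hch.
exists (size ch), (chain_mx ch); split; [|split].
- by apply: chain_mx_channel => [|e /hpos []//]; rewrite hsum subr0.
- move=> i; apply: (chain_refines_channel hch (hM i)) => c hc.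
  by rewrite mem_filter hc; apply/allpairsP; exists (i, c); rewrite !mem_enum.
- move=> h H hH hlb; apply: (channel_refines_chain hch hH) => P.
  rewrite mem_filter => /andP[_ /allpairsP [[i c] [_ _ ->]]].
  have [W [hW <-]] := hlb i; exists (fun j => W j c); last exact: col_mulmx.
  by move=> j; rewrite row_stochastic_le1 // andbT; case: hW.
Qed.
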